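(* Let $\kappa$ be a regular uncountable cardinal, $J$ a $\kappa$-complete ideal on $\kappa$, and $\sigma<\kappa$ an infinite cardinal. If $\curlywedge^-(\sigma,\kappa,J)$ holds, then so does $\curlywedge^-(\sigma',\kappa,J)$ for every cardinal $\sigma'$ with $\sigma\leq\sigma'<\kappa$.
   Context: An ideal on $\kappa$ is a nonempty $J \subseteq P(\kappa)$ with $\kappa \notin J$, every bounded subset of $\kappa$ in $J$, $J$ closed under subsets and under unions of two members; $J^+ = P(\kappa)\setminus J$; $\kappa$-complete means closed under unions of fewer than $\kappa$ members. $acc(\kappa)$ is the set of nonzero limit ordinals below $\kappa$; $P_\sigma(X)=\{x\subseteq X:|x|<\sigma\}$. For an infinite cardinal $\sigma$ and a limit ordinal $\delta\geq\sigma$, a subset $C$ of $P_\sigma(\delta)$ is a generalized club if there is $F:P_\omega(\delta)\to\delta$ with $\{x\in P_\sigma(\delta) : F``P_\omega(x)\subseteq x\}\subseteq C$. $\curlywedge^-(\sigma,\kappa,J)$ asserts the existence, for $i\in\delta\in acc(\kappa)\setminus\sigma$, of a cofinal subset $C^i_\delta$ of $(P_\sigma(\delta),\subseteq)$ such that $\{\delta : \exists i<\delta\,(C^i_\delta\subseteq D)\}\in J^+$ for every generalized club $D\subseteq P_\sigma(\kappa)$. *)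

(* The regular uncountable cardinal kappa is modelled as a type K
   carrying a strict well-order [lt] whose order type is kappa; ordinals below
   kappa are the elements of K, subsets of kappa are predicates K -> Prop. *)
From Stdlib Require Import List.

Set Implicit Arguments.

Section Kappa.
Variable K : Type.
Variable lt : K -> K -> Prop.

Definition le (a b : K) : Prop := lt a b \/ a = b.

Definition strict_well_order : Prop :=
  (forall a, ~ lt a a) /\
  (forall a b c, lt a b -> lt b c -> lt a c) /\
  (forall a b, lt a b \/ a = b \/ lt b a) /\
  well_founded lt.

(* there is an injection from the initial segment {b | b < s} into A,
   i.e. |s| <= |A| *)
Definition seg_injects (s : K) (A : K -> Prop) : Prop :=
  exists f : K -> K,
    (forall b, lt b s -> A (f b)) /\
    (forall b c, lt b s -> lt c s -> f b = f c -> b = c).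

(* |A| < |s| (using choice, this is: no injection of s into A) *)
Definition card_lt (A : K -> Prop) (s : K) : Prop := ~ seg_injects s A.

Definition is_cardinal (s : K) : Prop :=
  forall t, lt t s -> ~ seg_injects s (fun x => lt x t).

Definition is_infinite (s : K) : Prop :=
  exists g : nat -> K, (forall n, lt (g n) s) /\
    (forall n m, g n = g m -> n = m).

Definition regular_uncountable_cardinal : Prop :=
  (forall a, ~ exists f : K -> K,
      (forall x, lt (f x) a) /\ (forall x y, f x = f y -> x = y)) /\
  (~ exists f : K -> nat, forall x y, f x = f y -> x = y) /\
  (* regular: every unbounded subset has cardinality kappa *)
  (forall X : K -> Prop, (forall a, exists x, X x /\ le a x) ->
     exists f : K -> K, (forall x, X (f x)) /\ (forall x y, f x = f y -> x = y)).

Definition bounded (X : K -> Prop) : Prop := exists a, forall x, X x -> lt x a.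

Definition subset (A B : K -> Prop) : Prop := forall x, A x -> B x.

Definition is_ideal (J : (K -> Prop) -> Prop) : Prop :=
  (exists A, J A) /\
  ~ J (fun _ => True) /\
  (forall A, bounded A -> J A) /\
  (forall A B, J B -> subset A B -> J A) /\
  (forall A B, J A -> J B -> J (fun x => A x \/ B x)).

(* kappa-complete: closed under unions of fewer than kappa members
   (families indexed by ordinals a < kappa) *)
Definition kappa_complete (J : (K -> Prop) -> Prop) : Prop :=
  forall (a : K) (F : K -> K -> Prop),
    (forall b, lt b a -> J (F b)) ->
    J (fun x => exists b, lt b a /\ F b x).

Definition positive (J : (K -> Prop) -> Prop) (A : K -> Prop) : Prop := ~ J A.

Definition is_limit (d : K) : Prop :=
  (exists x, lt x d) /\ (forall x, lt x d -> exists y, lt x y /\ lt y d).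

Definition finite_set (s : K -> Prop) : Prop :=
  exists l : list K, forall a, s a <-> In a l.

Definition P_below (sigma d : K) (x : K -> Prop) : Prop :=
  subset x (fun a => lt a d) /\ card_lt x sigma.

Definition P_kappa (sigma : K) (x : K -> Prop) : Prop := card_lt x sigma.

Definition cofinal_in (sigma d : K) (C : (K -> Prop) -> Prop) : Prop :=
  (forall x, C x -> P_below sigma d x) /\
  (forall y, P_below sigma d y -> exists x, C x /\ subset y x).

(* F is given as a function on all subsets; only its values on finite sets matter. *)
Definition gen_club (sigma : K) (D : (K -> Prop) -> Prop) : Prop :=
  exists F : (K -> Prop) -> K,
    forall x, P_kappa sigma x ->
      (forall s, finite_set s -> subset s x -> x (F s)) -> D x.

Definition wedge_minus (sigma : K) (J : (K -> Prop) -> Prop) : Prop :=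
  exists C : K -> K -> (K -> Prop) -> Prop,
    (forall i d, is_limit d -> le sigma d -> lt i d -> cofinal_in sigma d (C i d)) /\
    (forall D : (K -> Prop) -> Prop,
       (forall x, D x -> P_kappa sigma x) -> gen_club sigma D ->
       positive J (fun d => is_limit d /\ le sigma d /\
                            exists i, lt i d /\ (forall x, C i d x -> D x))).
End Kappa.

(** Let [C] witness the principle for [sigma < sigma'].  Replace each [C^i_delta]
    by the sets [x] in [P_sigma'(delta)] such that every finite subset of [x] lies in
    some [c] in [C^i_delta] with [c] included in [x].  These sets are cofinal: close
    a given [y] of size [< sigma'] omega times under "add a member of [C^i_delta]
    covering a finite subset"; with [lam = max(|y|, sigma)], each stage is a union
    of at most [lam] sets of size at most [lam], so by [|lam * lam| = |lam|]
    (Hessenberg) the closure still has size [<= lam < sigma'].  Conversely, if every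
    member of [C^i_delta] is closed under the function [F] of a generalized club,
    so is every new set, hence [C'^i_delta] lies in the club whenever [C^i_delta]
    lies in the [sigma]-club of [F]-closed sets; the stationary set for [sigma]
    differs from the one for [sigma'] only below [sigma'], which is bounded. *)

From Stdlib Require Import List Arith Lia FinFun Classical ClassicalEpsilon
  FunctionalExtensionality PropExtensionality.

Definition inj_on {A B : Type} (P : A -> Prop) (f : A -> B) (Q : B -> Prop) : Prop :=
  (forall x, P x -> Q (f x)) /\ (forall x y, P x -> P y -> f x = f y -> x = y).

Definition list_in {T : Type} (P : T -> Prop) (l : list T) : Prop :=
  forall a, In a l -> P a.

Lemma inj_on_comp {A B C : Type} (P : A -> Prop) (Q : B -> Prop) (R : C -> Prop)
    (f : A -> B) (g : B -> C) :
  inj_on P f Q -> inj_on Q g R -> inj_on P (fun x => g (f x)) R.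
Proof.
  intros [Hf1 Hf2] [Hg1 Hg2]. split; auto.
Qed.

Lemma inj_on_sub {A B : Type} (P P' : A -> Prop) (Q Q' : B -> Prop) (f : A -> B) :
  (forall x, P' x -> P x) -> (forall y, Q y -> Q' y) -> inj_on P f Q -> inj_on P' f Q'.
Proof. intros HP HQ [H1 H2]. split; auto. Qed.

Lemma inj_on_of_onto {S T : Type} (inhS : inhabited S) (P : T -> Prop) (Q : S -> Prop)
    (r : S -> T) :
  (forall z, P z -> exists q, Q q /\ r q = z) -> exists h, inj_on P h Q.
Proof.
  intros Honto. exists (fun z => epsilon inhS (fun q => Q q /\ r q = z)). split.
  - intros z Hz. apply (epsilon_spec inhS _ (Honto z Hz)).
  - intros z w Hz Hw E.
    destruct (epsilon_spec inhS _ (Honto z Hz)) as [_ Ez].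
    destruct (epsilon_spec inhS _ (Honto w Hw)) as [_ Ew].
    rewrite <- Ez, <- Ew, E. reflexivity.
Qed.

Lemma pair_map_inj_on {A B : Type} (P : A -> Prop) (Q : B -> Prop) (f : A -> B) :
  inj_on P f Q ->
  inj_on (fun p => P (fst p) /\ P (snd p)) (fun p => (f (fst p), f (snd p)))
         (fun p => Q (fst p) /\ Q (snd p)).
Proof.
  intros [H1 H2]. split.
  - intros p [Hp1 Hp2]. simpl. auto.
  - intros [x1 x2] [y1 y2] [Hx1 Hx2] [Hy1 Hy2] E. simpl in *.
    injection E as E1 E2. f_equal; auto.
Qed.

Lemma map_inj_on {A B : Type} (P : A -> Prop) (Q : B -> Prop) (f : A -> B) :
  inj_on P f Q -> inj_on (list_in P) (map f) (list_in Q).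
Proof.
  intros [H1 H2]. split.
  - intros l Hl b Hb. apply in_map_iff in Hb. destruct Hb as [a [<- Ha]]. auto.
  - induction x as [|a l IH]; intros [|b l'] Hl Hl' E; simpl in E;
      try discriminate; auto.
    injection E as E E'. f_equal.
    + apply H2; auto; [apply Hl | apply Hl']; simpl; auto.
    + apply IH; auto; intros c Hc; [apply Hl | apply Hl']; simpl; auto.
Qed.

Lemma nat_not_inj_list {T : Type} (l : list T) (f : nat -> T) :
  (forall n, In (f n) l) -> ~ (forall n m, f n = f m -> n = m).
Proof.
  intros Hin Hf.
  assert (H := @NoDup_incl_length T _ l
                 (Injective_map_NoDup Hf (seq_NoDup (S (length l)) 0))).
  rewrite length_map, length_seq in H.
  enough (S (length l) <= length l) by lia.
  apply H. intros x Hx. apply in_map_iff in Hx. destruct Hx as [n [<- _]]. apply Hin.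
Qed.

Lemma list_cover_or_nat_inj {T : Type} (inhT : inhabited T) (A : T -> Prop) :
  (exists l, forall a, A a -> In a l) \/
  exists g : nat -> T, (forall n, A (g n)) /\ (forall n m, g n = g m -> n = m).
Proof.
  destruct (classic (exists l, forall a, A a -> In a l)) as [Hl | Hnl]; [now left | right].
  assert (Hfresh : forall l, exists a, A a /\ ~ In a l).
  { intros l. apply NNPP. intros Hn. apply Hnl. exists l. intros a Ha.
    apply NNPP. intros Hna. apply Hn. now exists a. }
  set (fresh := fun l => epsilon inhT (fun a => A a /\ ~ In a l)).
  assert (Hfr : forall l, A (fresh l) /\ ~ In (fresh l) l)
    by (intros l; apply (epsilon_spec inhT _ (Hfresh l))).
  set (prefix := nat_rect (fun _ => list T) nil (fun _ l => fresh l :: l)).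
  assert (Hstep : forall n, prefix (S n) = fresh (prefix n) :: prefix n) by reflexivity.
  assert (Hprefix : forall n m, n < m -> In (fresh (prefix n)) (prefix m)).
  { intros n m Hnm. induction Hnm as [|m _ IH]; rewrite Hstep; simpl; auto. }
  exists (fun n => fresh (prefix n)). split; [intros n; apply Hfr |].
  intros n m E. destruct (Nat.lt_trichotomy n m) as [H | [H | H]]; auto; exfalso.
  - apply (proj2 (Hfr (prefix m))). rewrite <- E. auto.
  - apply (proj2 (Hfr (prefix n))). rewrite E. auto.
Qed.

Section WellOrder.
Context {K : Type} {lt : K -> K -> Prop} (lt_wo : strict_well_order lt)
  (inhK : inhabited K).

Lemma lt_irrefl a : ~ lt a a.
Proof. destruct lt_wo as [H _]. apply H. Qed.

Lemma lt_trans a b c : lt a b -> lt b c -> lt a c.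
Proof. destruct lt_wo as [_ [H _]]. apply H. Qed.

Lemma lt_trichotomy a b : lt a b \/ a = b \/ lt b a.
Proof. destruct lt_wo as [_ [_ [H _]]]. apply H. Qed.

Lemma lt_wf : well_founded lt.
Proof. destruct lt_wo as [_ [_ [_ H]]]. exact H. Qed.

Lemma lt_le_trans a b c : lt a b -> le lt b c -> lt a c.
Proof. intros H [H' | <-]; [exact (lt_trans a b c H H') | exact H]. Qed.

Lemma le_trans a b c : le lt a b -> le lt b c -> le lt a c.
Proof. intros [Hab | <-] Hbc; [left; exact (lt_le_trans _ _ _ Hab Hbc) | exact Hbc]. Qed.

Lemma le_or_lt a b : le lt a b \/ lt b a.
Proof. unfold le. destruct (lt_trichotomy a b) as [H | [H | H]]; auto. Qed.

Definition seg (s : K) : K -> Prop := fun b => lt b s.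

Lemma infinite_le a b : is_infinite lt a -> le lt a b -> is_infinite lt b.
Proof.
  intros [g [Hg1 Hg2]] Hab. exists g. split; [|exact Hg2].
  intros n. exact (lt_le_trans _ _ _ (Hg1 n) Hab).
Qed.

Lemma list_card_lt (s : K) (l : list K) :
  is_infinite lt s -> card_lt lt (fun a => In a l) s.
Proof.
  intros [g [Hg1 Hg2]] [f [Hf1 Hf2]].
  apply (nat_not_inj_list l (fun n => f (g n))); [intros n; apply Hf1, Hg1 |].
  intros n m E. apply Hg2, Hf2; auto.
Qed.

Lemma inj_seg_card_lt (A : K -> Prop) (s b : K) (f : K -> K) :
  is_cardinal lt s -> lt b s -> inj_on A f (seg b) -> card_lt lt A s.
Proof.
  intros Hs Hb Hf [h Hh]. apply (Hs b Hb). exists (fun z => f (h z)).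
  exact (inj_on_comp (seg s) A (seg b) h f Hh Hf).
Qed.

Definition least (Q : K -> Prop) : K :=
  epsilon inhK (fun m => Q m /\ forall z, Q z -> ~ lt z m).

Lemma least_spec (Q : K -> Prop) : (exists m, Q m) ->
  Q (least Q) /\ forall z, Q z -> ~ lt z (least Q).
Proof.
  intros [m Hm]. unfold least. apply epsilon_spec.
  induction m as [m IH] using (well_founded_ind lt_wf).
  destruct (classic (exists z, Q z /\ lt z m)) as [[z [Hz Hlt]] | Hmin].
  - exact (IH z Hlt Hz).
  - exists m. split; [exact Hm |]. intros z Hz Hlt. apply Hmin. eauto.
Qed.

Section Rank.
Variables (S : Type) (P : S -> Prop) (R : S -> S -> Prop) (mu : K).
Hypothesis R_wf : well_founded R.
Hypothesis R_trans : forall p q r, R p q -> R q r -> R p r.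
Hypothesis R_total : forall p q, R p q \/ p = q \/ R q p.
Hypothesis R_segments_small :
  forall p, P p -> ~ exists h, inj_on (seg mu) h (fun q => P q /\ R q p).

Definition rank : S -> K :=
  Fix R_wf (fun _ => K)
    (fun p rec => least (fun m => ~ exists q (h : R q p), P q /\ rec q h = m)).

Lemma rank_eq p : rank p = least (fun m => ~ exists q, R q p /\ P q /\ rank q = m).
Proof.
  unfold rank at 1. rewrite Fix_eq.
  - f_equal. apply functional_extensionality. intros m.
    apply propositional_extensionality.
    split; intros H [q [Hq [Pq E]]]; apply H; eauto.
  - intros p' f g Hfg.
    assert (f = g) as ->; [|reflexivity].
    apply functional_extensionality_dep. intros q.
    apply functional_extensionality_dep. intros Hq. apply Hfg.
Qed.

Lemma rank_spec p : P p ->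
  (forall z, (exists q, R q p /\ P q /\ rank q = z) <-> lt z (rank p)) /\ lt (rank p) mu.
Proof.
  induction p as [p IH] using (well_founded_ind R_wf). intros Pp.
  set (Img := fun z => exists q, R q p /\ P q /\ rank q = z).
  assert (Img_down : forall z w, Img z -> lt w z -> Img w).
  { intros z w [q [Rq [Pq <-]]] Hw. apply (IH q Rq Pq) in Hw.
    destruct Hw as [q' [Rq' [Pq' <-]]]. exists q'. eauto. }
  assert (Img_mu : ~ Img mu).
  { intros [q [Rq [Pq E]]]. apply (lt_irrefl mu). rewrite <- E at 1. apply (IH q Rq Pq). }
  assert (Hrank : rank p = least (fun m => ~ Img m)) by (rewrite rank_eq; reflexivity).
  destruct (least_spec (fun m => ~ Img m) (ex_intro _ mu Img_mu)) as [Hnot Hmin].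
  rewrite <- Hrank in Hnot, Hmin.
  assert (Hiff : forall z, Img z <-> lt z (rank p)).
  { intros z. split.
    - intros Hz. destruct (lt_trichotomy z (rank p)) as [H | [E | H]]; auto;
        exfalso; apply Hnot; [now rewrite <- E | eauto].
    - intros Hl. apply NNPP. intros Hn. exact (Hmin z Hn Hl). }
  split; [exact Hiff |].
  destruct (le_or_lt mu (rank p)) as [Hle | Hlt]; [exfalso | exact Hlt].
  apply (R_segments_small p Pp), (inj_on_of_onto (inhabits p) _ _ rank).
  intros z Hz. destruct (proj2 (Hiff z) (lt_le_trans _ _ _ Hz Hle)) as [q [Rq [Pq E]]].
  eauto.
Qed.

Lemma rank_embedding : exists r : S -> K, inj_on P r (seg mu) /\
  (forall p z, P p -> lt z (r p) -> exists q, P q /\ r q = z).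
Proof.
  exists rank. split; [split |].
  - intros p Pp. apply (rank_spec p Pp).
  - intros p q Pp Pq E. destruct (R_total p q) as [H | [H | H]]; auto; exfalso.
    + apply (lt_irrefl (rank q)). rewrite <- E at 1. apply (rank_spec q Pq). eauto.
    + apply (lt_irrefl (rank p)). rewrite E at 1. apply (rank_spec p Pp). eauto.
  - intros p z Pp Hz. apply (rank_spec p Pp) in Hz. destruct Hz as [q [_ [Pq E]]]. eauto.
Qed.
End Rank.

Lemma card_lt_inj_seg (A : K -> Prop) (s : K) :
  card_lt lt A s -> exists b, lt b s /\ exists f, inj_on A f (seg b).
Proof.
  intros Hcard.
  destruct (rank_embedding K A lt s lt_wf lt_trans lt_trichotomy) as [r [[Hr1 Hr2] Hdown]].
  { intros p _ [h Hh]. apply Hcard. exists h.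
    exact (inj_on_sub _ _ _ _ _ (fun _ H => H) (fun _ H => proj1 H) Hh). }
  destruct (classic (forall z, lt z s -> exists q, A q /\ r q = z)) as [Honto | Hnot].
  - exfalso. apply Hcard. exact (inj_on_of_onto inhK (seg s) A r Honto).
  - apply not_all_ex_not in Hnot. destruct Hnot as [b Hb].
    apply imply_to_and in Hb. destruct Hb as [Hbs Hb].
    exists b. split; [exact Hbs |]. exists r. split; [| exact Hr2].
    intros q Aq. destruct (le_or_lt b (r q)) as [[Hl | E] | Hl]; [exfalso.. | exact Hl].
    + exact (Hb (Hdown q b Aq Hl)).
    + apply Hb. eauto.
Qed.

Lemma succ_inj_seg (c : K) : is_infinite lt c ->
  exists phi, inj_on (fun z => le lt z c) phi (seg c).
Proof.
  intros [g [Hg1 Hg2]].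
  (* Hilbert's hotel: [c] goes to [g 0] and each [g n] to [g (S n)]. *)
  set (index := fun z => epsilon (inhabits 0) (fun n => g n = z)).
  assert (Hindex : forall z, (exists n, g n = z) -> g (index z) = z)
    by (intros z Hz; exact (epsilon_spec (inhabits 0) _ Hz)).
  exists (fun z => if excluded_middle_informative (z = c) then g 0 else
            if excluded_middle_informative (exists n, g n = z) then g (S (index z)) else z).
  split.
  - intros z Hz.
    destruct (excluded_middle_informative (z = c)) as [Ec | Ec]; [apply Hg1 |].
    destruct (excluded_middle_informative (exists n, g n = z)); [apply Hg1 |].
    destruct Hz as [Hz | Hz]; [exact Hz | contradiction].
  - intros z w _ _.
    destruct (excluded_middle_informative (z = c)) as [Ez | Ez];
    destruct (excluded_middle_informative (w = c)) as [Ew | Ew];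
    try destruct (excluded_middle_informative (exists n, g n = z)) as [Gz | Gz];
    try destruct (excluded_middle_informative (exists n, g n = w)) as [Gw | Gw];
    intros E; try congruence;
    try (apply Hg2 in E; discriminate);
    try (exfalso; subst; eauto; fail).
    apply Hg2 in E. injection E as E.
    rewrite <- (Hindex z Gz), <- (Hindex w Gw), E. reflexivity.
Qed.

Definition kmax (a b : K) : K := if excluded_middle_informative (lt a b) then b else a.

Lemma kmax_ge a b : le lt a (kmax a b) /\ le lt b (kmax a b).
Proof.
  unfold kmax, le. destruct (excluded_middle_informative (lt a b)); auto.
  split; auto. destruct (lt_trichotomy a b) as [H | [H | H]]; auto; contradiction.
Qed.

Lemma kmax_cases a b : kmax a b = a \/ kmax a b = b.
Proof. unfold kmax. destruct (excluded_middle_informative (lt a b)); auto. Qed.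

Definition pmax (p : K * K) : K := kmax (fst p) (snd p).

Definition godel_lt (p q : K * K) : Prop :=
  lt (pmax p) (pmax q) \/
  (pmax p = pmax q /\ (lt (fst p) (fst q) \/ (fst p = fst q /\ lt (snd p) (snd q)))).

Lemma godel_lt_wf : well_founded godel_lt.
Proof.
  assert (H : forall m a b, pmax (a, b) = m -> Acc godel_lt (a, b)).
  { intros m. induction m as [m IHm] using (well_founded_ind lt_wf).
    intros a. induction a as [a IHa] using (well_founded_ind lt_wf).
    intros b. induction b as [b IHb] using (well_founded_ind lt_wf).
    intros Em. constructor. intros [a' b'] [H | [E [H | [E' H]]]]; simpl in *.
    - apply (IHm (pmax (a', b'))); [rewrite <- Em |]; auto.
    - apply (IHa a' H). rewrite E. auto.
    - subst a'. apply (IHb b' H). rewrite E. auto. }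
  intros [a b]. exact (H _ a b eq_refl).
Qed.

Lemma godel_lt_trans p q r : godel_lt p q -> godel_lt q r -> godel_lt p r.
Proof.
  unfold godel_lt. intros [H1 | [E1 H1]] [H2 | [E2 H2]].
  - left. eapply lt_trans; eauto.
  - left. rewrite <- E2. auto.
  - left. rewrite E1. auto.
  - right. split; [congruence |].
    destruct H1 as [H1 | [F1 H1]]; destruct H2 as [H2 | [F2 H2]].
    + left. eapply lt_trans; eauto.
    + left. rewrite <- F2. auto.
    + left. rewrite F1. auto.
    + right. split; [congruence | eapply lt_trans; eauto].
Qed.

Lemma godel_lt_total p q : godel_lt p q \/ p = q \/ godel_lt q p.
Proof.
  unfold godel_lt.
  destruct (lt_trichotomy (pmax p) (pmax q)) as [H | [E | H]]; [tauto | | tauto].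
  destruct (lt_trichotomy (fst p) (fst q)) as [H1 | [E1 | H1]]; [tauto | | intuition].
  destruct (lt_trichotomy (snd p) (snd q)) as [H2 | [E2 | H2]]; [tauto | | intuition].
  right; left. destruct p, q; simpl in *; congruence.
Qed.

Lemma godel_lt_bounded p q :
  godel_lt q p -> le lt (fst q) (pmax p) /\ le lt (snd q) (pmax p).
Proof.
  intros Hq.
  assert (Hm : le lt (pmax q) (pmax p))
    by (destruct Hq as [H | [H _]]; [left | right]; exact H).
  destruct (kmax_ge (fst q) (snd q)) as [H1 H2].
  split; [exact (le_trans _ _ _ H1 Hm) | exact (le_trans _ _ _ H2 Hm)].
Qed.

Definition pairs_in (c : K) (p : K * K) : Prop := lt (fst p) c /\ lt (snd p) c.

Lemma godel_segment_small (c a b : K) :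
  (forall t, lt t c -> is_infinite lt t -> exists e, inj_on (pairs_in t) e (seg t)) ->
  is_cardinal lt c -> is_infinite lt c -> lt a c -> lt b c ->
  ~ exists h, inj_on (seg c) h (fun q => pairs_in c q /\ godel_lt q (a, b)).
Proof.
  intros IH Hc Hinf Ha Hb [h Hh].
  set (m := pmax (a, b)).
  assert (Hm : lt m c)
    by (unfold m, pmax; simpl; destruct (kmax_cases a b) as [-> | ->]; auto).
  assert (Hbox : inj_on (seg c) h (fun q => le lt (fst q) m /\ le lt (snd q) m)).
  { exact (inj_on_sub _ _ _ _ _ (fun _ H => H)
             (fun q H => godel_lt_bounded (a, b) q (proj2 H)) Hh). }
  destruct (classic (is_infinite lt m)) as [Hminf | Hmfin].
  - destruct (IH m Hm Hminf) as [e He]. destruct (succ_inj_seg m Hminf) as [phi Hphi].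
    apply (Hc m Hm). exists (fun z => e (phi (fst (h z)), phi (snd (h z)))).
    exact (inj_on_comp _ _ _ _ _ Hbox
             (inj_on_comp _ _ _ _ _ (pair_map_inj_on _ _ _ Hphi) He)).
  - destruct (list_cover_or_nat_inj inhK (seg m)) as [[L HL] | Hi]; [| contradiction].
    destruct Hinf as [g [Hg1 Hg2]].
    apply (nat_not_inj_list (list_prod (m :: L) (m :: L)) (fun n => h (g n))).
    + intros n. rewrite (surjective_pairing (h (g n))).
      destruct (proj1 Hbox (g n) (Hg1 n)) as [[H1 | H1] [H2 | H2]];
        apply in_prod; simpl; auto.
    + intros n k E. apply Hg2, (proj2 Hbox); [apply Hg1 | apply Hg1 | exact E].
Qed.

Lemma pairs_inj_seg (c : K) : is_infinite lt c -> exists e, inj_on (pairs_in c) e (seg c).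
Proof.
  induction c as [c IH] using (well_founded_ind lt_wf). intros Hinf.
  destruct (classic (is_cardinal lt c)) as [Hc | Hnc].
  - destruct (rank_embedding (K * K) (pairs_in c) godel_lt c
                godel_lt_wf godel_lt_trans godel_lt_total) as [r [Hr _]]; [| now exists r].
    intros [a b] [Ha Hb]. exact (godel_segment_small c a b IH Hc Hinf Ha Hb).
  - apply not_all_ex_not in Hnc. destruct Hnc as [t Ht].
    apply imply_to_and in Ht. destruct Ht as [Htc Ht]. apply NNPP in Ht.
    destruct Ht as [f Hf]. change (inj_on (seg c) f (seg t)) in Hf.
    destruct (IH t Htc) as [e He].
    { destruct Hinf as [g [Hg1 Hg2]]. exists (fun n => f (g n)).
      split; [intros n; apply (proj1 Hf), Hg1 |].
      intros n k E. apply Hg2, (proj2 Hf); [apply Hg1 | apply Hg1 | exact E]. }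
    exists (fun p => e (f (fst p), f (snd p))).
    apply (inj_on_sub _ _ (seg t) _ _ (fun _ H => H));
      [intros z Hz; exact (lt_trans _ _ _ Hz Htc) |].
    exact (inj_on_comp _ _ _ _ _ (pair_map_inj_on (seg c) _ _ Hf) He).
Qed.

(* The distinct tags [t0] and [t1] tell the empty list from a cons. *)
Fixpoint list_code (e : K * K -> K) (t0 t1 : K) (l : list K) : K :=
  match l with
  | nil => e (t0, t0)
  | a :: l => e (t1, e (a, list_code e t0 t1 l))
  end.

Lemma lists_inj_seg (lam : K) : is_infinite lt lam ->
  exists code, inj_on (list_in (seg lam)) code (seg lam).
Proof.
  intros Hinf. destruct (pairs_inj_seg lam Hinf) as [e [He1 He2]].
  destruct Hinf as [g [Hg1 Hg2]].
  assert (Hg01 : g 0 <> g 1) by (intros E; apply Hg2 in E; discriminate).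
  set (code := list_code e (g 0) (g 1)).
  assert (Hcode : forall l, list_in (seg lam) l -> lt (code l) lam).
  { induction l as [|a l IH]; intros Hl; simpl; apply He1; split; simpl; auto.
    apply He1. split; simpl; [apply Hl; left; reflexivity |].
    apply IH. intros x Hx. apply Hl. right. exact Hx. }
  exists code. split; [exact Hcode |].
  assert (Hcons : forall a l, list_in (seg lam) (a :: l) ->
            pairs_in lam (a, code l) /\ pairs_in lam (g 1, e (a, code l))).
  { intros a l Hl.
    assert (H : pairs_in lam (a, code l)).
    { split; simpl; [apply Hl; left; reflexivity |].
      apply Hcode. intros x Hx. apply Hl. right. exact Hx. }
    split; [exact H | split; [apply Hg1 | exact (He1 _ H)]]. }
  assert (H00 : pairs_in lam (g 0, g 0)) by (split; simpl; auto).
  induction x as [|a l IH]; intros [|b l'] Hl Hl' E; simpl in E.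
  - reflexivity.
  - apply He2 in E; [| exact H00 | apply Hcons; exact Hl'].
    injection E as E _. contradiction.
  - apply He2 in E; [| apply Hcons; exact Hl | exact H00].
    injection E as E _. symmetry in E. contradiction.
  - apply He2 in E; [| apply Hcons; exact Hl | apply Hcons; exact Hl'].
    injection E as E. apply He2 in E; [| apply Hcons; exact Hl | apply Hcons; exact Hl'].
    injection E as E1 E2. subst b. f_equal.
    apply IH; auto; intros x Hx; [apply Hl | apply Hl']; right; exact Hx.
Qed.

Lemma union_inj_seg {I : Type} (inhI : inhabited I) (Q : I -> Prop) (W : I -> K -> Prop)
    (lam : K) :
  is_infinite lt lam ->
  (exists idx, inj_on Q idx (seg lam)) ->
  (forall i, Q i -> exists h, inj_on (W i) h (seg lam)) ->
  exists h, inj_on (fun z => exists i, Q i /\ W i z) h (seg lam).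
Proof.
  intros Hinf [idx Hidx] HW.
  destruct (pairs_inj_seg lam Hinf) as [e He].
  set (hw := fun i =>
         epsilon (inhabits (fun z : K => z)) (fun h => inj_on (W i) h (seg lam))).
  assert (Hhw : forall i, Q i -> inj_on (W i) (hw i) (seg lam))
    by (intros i Hi; exact (epsilon_spec _ _ (HW i Hi))).
  set (pick := fun z => epsilon inhI (fun i => Q i /\ W i z)).
  assert (Hpick : forall z, (exists i, Q i /\ W i z) -> Q (pick z) /\ W (pick z) z)
    by (intros z Hz; exact (epsilon_spec _ _ Hz)).
  exists (fun z => e (idx (pick z), hw (pick z) z)).
  apply (inj_on_comp _ (pairs_in lam) _ (fun z => (idx (pick z), hw (pick z) z)) e);
    [| exact He].
  split.
  - intros z Hz. destruct (Hpick z Hz) as [HQ HWz].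
    split; simpl; [apply Hidx | apply Hhw]; auto.
  - intros z w Hz Hw E. injection E as E1 E2.
    destruct (Hpick z Hz) as [HQz HWz]. destruct (Hpick w Hw) as [HQw HWw].
    apply (proj2 Hidx) in E1; auto. rewrite E1 in E2, HWz.
    exact (proj2 (Hhw _ HQw) z w HWz HWw E2).
Qed.

Definition finitely_covered (C : (K -> Prop) -> Prop) (x : K -> Prop) : Prop :=
  forall s, finite_set s -> subset s x -> exists c, C c /\ subset s c /\ subset c x.

Section Closure.
Variables (sigma d : K) (C : (K -> Prop) -> Prop).
Hypothesis sigma_inf : is_infinite lt sigma.
Hypothesis C_cofinal : cofinal_in lt sigma d C.

Definition cover (l : list K) : K -> Prop :=
  epsilon (inhabits (fun _ => False)) (fun c => C c /\ subset (fun a => In a l) c).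

Lemma cover_spec l : list_in (seg d) l -> C (cover l) /\ subset (fun a => In a l) (cover l).
Proof.
  intros Hl. unfold cover. apply epsilon_spec, (proj2 C_cofinal).
  split; [exact Hl | exact (list_card_lt sigma l sigma_inf)].
Qed.

Lemma cover_below l : list_in (seg d) l -> subset (cover l) (seg d).
Proof. intros Hl. exact (proj1 (proj1 C_cofinal _ (proj1 (cover_spec l Hl)))). Qed.

Lemma cover_small l : list_in (seg d) l ->
  exists b, lt b sigma /\ exists f, inj_on (cover l) f (seg b).
Proof.
  intros Hl. apply card_lt_inj_seg.
  exact (proj2 (proj1 C_cofinal _ (proj1 (cover_spec l Hl)))).
Qed.

Section Iterate.
Variable y : K -> Prop.
Hypothesis y_below : subset y (seg d).

Fixpoint iter_cover (n : nat) : K -> Prop :=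
  match n with
  | 0 => y
  | S n => fun z => exists l, list_in (iter_cover n) l /\ cover l z
  end.

Definition cover_closure (z : K) : Prop := exists n, iter_cover n z.

Lemma iter_cover_below n : subset (iter_cover n) (seg d).
Proof.
  induction n as [|n IH]; simpl; [exact y_below |].
  intros z [l [Hl Hz]]. apply (cover_below l); [| exact Hz].
  intros a Ha. apply IH, Hl, Ha.
Qed.

Lemma iter_cover_succ n : subset (iter_cover n) (iter_cover (S n)).
Proof.
  intros z Hz. exists (z :: nil).
  assert (Hl : list_in (iter_cover n) (z :: nil)) by (intros a [<- | []]; exact Hz).
  split; [exact Hl |].
  apply (cover_spec (z :: nil)); [| left; reflexivity].
  intros a Ha. apply (iter_cover_below n), Hl, Ha.
Qed.

Lemma iter_cover_mono n m : n <= m -> subset (iter_cover n) (iter_cover m).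
Proof.
  induction 1 as [|m _ IH]; intros z Hz; [exact Hz |].
  apply iter_cover_succ, IH, Hz.
Qed.

Lemma iter_cover_list l : list_in cover_closure l -> exists N, list_in (iter_cover N) l.
Proof.
  induction l as [|a l IH]; intros Hl; [exists 0; intros a [] |].
  destruct (Hl a (or_introl eq_refl)) as [n Hn].
  destruct IH as [N HN]; [intros b Hb; apply Hl; right; exact Hb |].
  exists (Nat.max n N). intros b [<- | Hb].
  - exact (iter_cover_mono n _ (Nat.le_max_l n N) a Hn).
  - exact (iter_cover_mono N _ (Nat.le_max_r n N) b (HN b Hb)).
Qed.

Lemma cover_closure_below : subset cover_closure (seg d).
Proof. intros z [n Hz]. exact (iter_cover_below n z Hz). Qed.

Lemma cover_closure_finitely_covered : finitely_covered C cover_closure.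
Proof.
  intros s [l Hs_l] Hs. destruct (iter_cover_list l) as [N HN].
  { intros a Ha. apply Hs, Hs_l, Ha. }
  destruct (cover_spec l) as [Hc Hsub].
  { intros a Ha. apply (iter_cover_below N), HN, Ha. }
  exists (cover l). split; [exact Hc | split].
  - intros a Ha. apply Hsub, Hs_l, Ha.
  - intros z Hz. exists (S N), l. split; [exact HN | exact Hz].
Qed.

Variable lam : K.
Hypothesis lam_inf : is_infinite lt lam.
Hypothesis sigma_le_lam : le lt sigma lam.
Hypothesis y_small : exists f, inj_on y f (seg lam).

Lemma iter_cover_small n : exists f, inj_on (iter_cover n) f (seg lam).
Proof.
  induction n as [|n [f Hf]]; [exact y_small |].
  apply (union_inj_seg (inhabits nil) (list_in (iter_cover n)) cover lam lam_inf).
  - destruct (lists_inj_seg lam lam_inf) as [code Hcode].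
    exists (fun l => code (map f l)).
    exact (inj_on_comp _ _ _ _ _ (map_inj_on _ _ _ Hf) Hcode).
  - intros l Hl. destruct (cover_small l) as [b [Hb [h Hh]]].
    { intros a Ha. apply (iter_cover_below n), Hl, Ha. }
    exists h. refine (inj_on_sub _ _ _ _ _ (fun _ H => H) _ Hh).
    intros z Hz. exact (lt_trans _ _ _ Hz (lt_le_trans _ _ _ Hb sigma_le_lam)).
Qed.

Lemma cover_closure_small : exists f, inj_on cover_closure f (seg lam).
Proof.
  destruct (union_inj_seg (inhabits 0) (fun _ => True) iter_cover lam lam_inf)
    as [f Hf].
  - destruct lam_inf as [g [Hg1 Hg2]]. exists g. split; [intros n _; apply Hg1 | auto].
  - intros n _. apply iter_cover_small.
  - exists f. refine (inj_on_sub _ _ _ _ _ _ (fun _ H => H) Hf).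
    intros z [n Hz]. exists n. split; [exact I | exact Hz].
Qed.
End Iterate.

Lemma lifted_cofinal (sigma' : K) : is_cardinal lt sigma' -> lt sigma sigma' ->
  cofinal_in lt sigma' d (fun x => P_below lt sigma' d x /\ finitely_covered C x).
Proof.
  intros Hcard Hlt. split; [now intros x [Hx _] |].
  intros y [Hy_below Hy_card].
  destruct (card_lt_inj_seg y sigma' Hy_card) as [b [Hb [f Hf]]].
  set (lam := kmax b sigma).
  destruct (kmax_ge b sigma) as [Hb_lam Hsigma_lam].
  assert (Hlam : lt lam sigma')
    by (unfold lam; destruct (kmax_cases b sigma) as [-> | ->]; auto).
  assert (Hy_small : exists f, inj_on y f (seg lam)).
  { exists f. refine (inj_on_sub _ _ _ _ _ (fun _ H => H) _ Hf).
    intros z Hz. exact (lt_le_trans _ _ _ Hz Hb_lam). }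
  destruct (cover_closure_small y Hy_below lam (infinite_le _ _ sigma_inf Hsigma_lam)
              Hsigma_lam Hy_small) as [h Hh].
  exists (cover_closure y). split; [split; [split |] |].
  - exact (cover_closure_below y Hy_below).
  - exact (inj_seg_card_lt _ _ _ _ Hcard Hlam Hh).
  - exact (cover_closure_finitely_covered y Hy_below).
  - intros z Hz. exists 0. exact Hz.
Qed.
End Closure.

Definition closed_under (F : (K -> Prop) -> K) (x : K -> Prop) : Prop :=
  forall s, finite_set s -> subset s x -> x (F s).

Lemma closed_under_gen_club (sigma : K) (F : (K -> Prop) -> K) :
  gen_club lt sigma (fun x => P_kappa lt sigma x /\ closed_under F x).
Proof. exists F. intros x Hx HF. split; assumption. Qed.

Lemma finitely_covered_closed_under (C : (K -> Prop) -> Prop) (F : (K -> Prop) -> K) x :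
  (forall c, C c -> closed_under F c) -> finitely_covered C x -> closed_under F x.
Proof.
  intros HC Hx s Hs Hsx. destruct (Hx s Hs Hsx) as [c [Hc [Hsc Hcx]]].
  apply Hcx, (HC c Hc); assumption.
Qed.

Lemma ideal_sub_union_bounded (J : (K -> Prop) -> Prop) (A B : K -> Prop) (s : K) :
  is_ideal lt J -> J A -> (forall d, B d -> A d \/ lt d s) -> J B.
Proof.
  intros [_ [_ [Hbounded [Hsub Hunion]]]] HA HB.
  apply (Hsub B (fun d => A d \/ lt d s)); [| exact HB].
  apply Hunion; [exact HA | apply Hbounded; now exists s].
Qed.

End WellOrder.

Theorem corollary4p5 (K : Type) (lt : K -> K -> Prop)
  (Hwo : strict_well_order lt)
  (Hkappa : regular_uncountable_cardinal lt)
  (J : (K -> Prop) -> Prop)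
  (HJ : is_ideal lt J) (HJc : kappa_complete lt J)
  (sigma : K) (Hs_card : is_cardinal lt sigma) (Hs_inf : is_infinite lt sigma) :
  wedge_minus lt sigma J ->
  forall sigma' : K, is_cardinal lt sigma' -> le lt sigma sigma' ->
    wedge_minus lt sigma' J.
Proof.
  intros HW sigma' Hcard' [Hlt | <-]; [| exact HW].
  destruct HW as [C [HC_cof HC_club]].
  exists (fun i d x => P_below lt sigma' d x /\ finitely_covered (C i d) x). split.
  - intros i d Hd Hle' Hi.
    apply (lifted_cofinal Hwo (inhabits sigma) sigma d (C i d) Hs_inf);
      [| exact Hcard' | exact Hlt].
    apply HC_cof; [exact Hd | left; exact (lt_le_trans Hwo _ _ _ Hlt Hle') | exact Hi].
  - intros D HD [F HF] HJD.
    apply (HC_club (fun x => P_kappa lt sigma x /\ closed_under F x));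
      [now intros x [] | apply closed_under_gen_club |].
    apply (ideal_sub_union_bounded _ _ _ sigma' HJ HJD).
    intros d [Hd [_ [i [Hi HCi]]]].
    destruct (le_or_lt Hwo sigma' d) as [Hle' | Hlt']; [left | right; exact Hlt'].
    split; [exact Hd | split; [exact Hle' | exists i; split; [exact Hi |]]].
    intros x [[_ Hx] Hcov]. apply HF; [exact Hx |].
    apply (finitely_covered_closed_under (C i d) F x); [| exact Hcov].
    intros c Hc. exact (proj2 (HCi c Hc)).
Qed.
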